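(* Let $n$ be an odd positive integer, $n_1=\lceil n/2\rceil$, $n_0=\lfloor n/2\rfloor$. Suppose $k\in K_0(\mathfrak{p})$ and $g\in\{1,\begin{pmatrix}0&1\\\varpi&0\end{pmatrix}\}$. Then $k g w a(\varpi^{n_1})=k'a(\varpi^{n_1})g'z$ for some $k'\in K$ with $l(k'a(\varpi^{n_1}))\le n_0$, some $g'\in\{1,\begin{pmatrix}0&1\\\varpi^n&0\end{pmatrix}\}$, and some $z\in Z$.
   Context: $F$ is a non-archimedean local field of characteristic $0$ with ring of integers $\mathfrak{o}$, maximal ideal $\mathfrak{p}$, uniformizer $\varpi$; $U_j=\{x\in\mathfrak{o}^\times: v(x-1)\ge j\}$. $G=\mathrm{GL}_2(F)$, $K=\mathrm{GL}_2(\mathfrak{o})$, $K_0(\mathfrak{p})=K\cap\begin{pmatrix}\mathfrak{o}&\mathfrak{o}\\\mathfrak{p}&\mathfrak{o}\end{pmatrix}$, $K_1(\mathfrak{p}^n)=K\cap\begin{pmatrix}1+\mathfrak{p}^n&\mathfrak{o}\\\mathfrak{p}^n&\mathfrak{o}\end{pmatrix}$, $w=\begin{pmatrix}0&1\\-1&0\end{pmatrix}$, $a(y)=\mathrm{diag}(y,1)$, $n(x)=\begin{pmatrix}1&x\\0&1\end{pmatrix}$, $Z$ the center, $N=\{n(x)\}$. There is a disjoint decomposition $G=\bigsqcup_{t\in\mathbb{Z}}\bigsqcup_{0\le l\le n}\bigsqcup_{v\in\mathfrak{o}^\times/U_{\min(l,n-l)}}ZN a(\varpi^t)wn(\varpi^{-l}v)K_1(\mathfrak{p}^n)$;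 for $h\in G$, $l(h)$ denotes the unique integer $0\le l\le n$ with $h\in ZNa(\varpi^{t})wn(\varpi^{-l}v)K_1(\mathfrak{p}^n)$ for some $t\in\mathbb Z$, $v\in\mathfrak{o}^\times$. *)

From HB Require Import structures.
From mathcomp Require Import all_boot all_order all_algebra.
Set Implicit Arguments. Unset Strict Implicit. Unset Printing Implicit Defensive.
Import Order.TTheory GRing.Theory Num.Theory.
Local Open Scope ring_scope.

(* A non-archimedean local field of characteristic 0, presented by a
   normalized discrete valuation [lf_val] (its value at 0 is irrelevant;
   "v(x) >= j" is encoded by [vge], which treats v(0) = +oo), a uniformizer,
   characteristic 0, finite residue field, and completeness. *)
Record local_field (F : fieldType) := LocalField {
  lf_val : F -> int;
  lf_unif : F;
  lf_val_mul : forall x y : F, x != 0 -> y != 0 ->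
      lf_val (x * y) = lf_val x + lf_val y;
  lf_val_add : forall x y : F, x != 0 -> y != 0 -> x + y != 0 ->
      Num.min (lf_val x) (lf_val y) <= lf_val (x + y);
  lf_unif_neq0 : lf_unif != 0;
  lf_val_unif : lf_val lf_unif = 1;
  lf_char0 : forall m : nat, (m.+1)%:R != 0 :> F;
  lf_residue_finite : exists s : seq F, forall x : F,
      (x = 0 \/ 0 <= lf_val x) ->
      exists2 y, y \in s & (x - y = 0 \/ 1 <= lf_val (x - y));
  lf_complete : forall u : nat -> F,
      (forall j : int, exists N : nat, forall p q : nat, (N <= p)%N -> (N <= q)%N ->
          u p - u q = 0 \/ j <= lf_val (u p - u q)) ->
      exists l : F, forall j : int, exists N : nat, forall p : nat, (N <= p)%N ->
          u p - l = 0 \/ j <= lf_val (u p - l)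
}.

Section LF.
Variables (F : fieldType) (L : local_field F).

Definition vge (x : F) (j : int) : Prop := x = 0 \/ j <= lf_val L x.
Definition is_unit_o (x : F) : Prop := x != 0 /\ lf_val L x = 0.

Definition i0 : 'I_2 := ord0.
Definition i1 : 'I_2 := ord_max.

Definition mx2 (a b c d : F) : 'M[F]_2 :=
  \matrix_(i < 2, j < 2)
    if (i == i0) then (if j == i0 then a else b) else (if j == i0 then c else d).

Definition wmx : 'M[F]_2 := mx2 0 1 (-1) 0.
Definition amx (y : F) : 'M[F]_2 := mx2 y 0 0 1.
Definition nmx (x : F) : 'M[F]_2 := mx2 1 x 0 1.

Definition in_K (k : 'M[F]_2) : Prop :=
  (forall i j, vge (k i j) 0) /\ is_unit_o (\det k).
Definition in_K0p (k : 'M[F]_2) : Prop := in_K k /\ vge (k i1 i0) 1.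
Definition in_K1 (n : nat) (k : 'M[F]_2) : Prop :=
  in_K k /\ vge (k i0 i0 - 1) n%:Z /\ vge (k i1 i0) n%:Z.
Definition in_Z (z : 'M[F]_2) : Prop := exists c : F, c != 0 /\ z = c%:M.

Definition has_level (n : nat) (h : 'M[F]_2) (l : nat) : Prop :=
  (l <= n)%N /\
  exists (z : 'M[F]_2) (x : F) (t : int) (v : F) (k1 : 'M[F]_2),
    [/\ in_Z z, is_unit_o v, in_K1 n k1 &
      h = z *m nmx x *m amx (lf_unif L ^ t) *m wmx
            *m nmx (lf_unif L ^- l * v) *m k1].

(* l(h) <= m, where l(h) is the (unique) level of h *)
Definition level_le (n : nat) (h : 'M[F]_2) (m : nat) : Prop :=
  exists l : nat, has_level n h l /\ (l <= m)%N.

End LF.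

From HB Require Import structures.
From mathcomp Require Import all_boot all_order all_algebra.
From mathcomp Require Import ring zify.
Set Implicit Arguments. Unset Strict Implicit. Unset Printing Implicit Defensive.
Import Order.TTheory GRing.Theory Num.Theory.
Local Open Scope ring_scope.

(* Write k = [[a, b], [c, d]] with d a unit and c in p, and m = n_1.  For
   g = 1 take k' = k w, so that k' a(varpi^m) = [[-b varpi^m, a], [-d varpi^m, c]].
   Choosing beta in o with e = c - d varpi^m beta of valuation j in [1, m]
   (beta = 0 if v(c) <= m, beta = -1/d otherwise), an explicit computation
   puts this matrix in the double coset of level m - j <= n_0.  For the other
   g, k g w a(varpi^m) = -(k w) a(varpi^m) [[0, 1], [varpi^n, 0]] varpi^-n_0,
   and multiplying by the central -1 does not change the level. *)

Section Mx2.
Variable F : fieldType.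

Lemma mx2_eta (k : 'M[F]_2) : k = mx2 (k i0 i0) (k i0 i1) (k i1 i0) (k i1 i1).
Proof.
apply/matrixP => i j; rewrite !mxE.
case: i => [[|[|i]]] Hi //; case: j => [[|[|j]]] Hj //=;
by congr (k _ _); apply: val_inj.
Qed.

Lemma mx2_mul (a b c d a' b' c' d' : F) :
  mx2 a b c d *m mx2 a' b' c' d' =
  mx2 (a * a' + b * c') (a * b' + b * d') (c * a' + d * c') (c * b' + d * d').
Proof.
apply/matrixP => i j; rewrite !mxE !big_ord_recr big_ord0 /= !mxE /= add0r.
by case: i => [[|[|i]]] Hi //; case: j => [[|[|j]]] Hj.
Qed.

Lemma mx2_scalar (c : F) : c%:M = mx2 c 0 0 c.
Proof.
apply/matrixP => i j; rewrite !mxE.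
by case: i => [[|[|i]]] Hi //; case: j => [[|[|j]]] Hj.
Qed.

Lemma det_mx2 (a b c d : F) : \det (mx2 a b c d) = a * d - b * c.
Proof.
rewrite (expand_det_row _ ord0) !big_ord_recr big_ord0 /= add0r.
by rewrite /cofactor !det_mx11 !mxE /= !expr0 !mul1r expr1; ring.
Qed.

End Mx2.

Section Valuation.
Variables (F : fieldType) (L : local_field F).
Local Notation v := (lf_val L).
Local Notation P := (lf_unif L).

Lemma val1 : v 1 = 0.
Proof.
have := lf_val_mul L (oner_neq0 F) (oner_neq0 F); rewrite mulr1 => h.
by apply: (addrI (v 1)); rewrite addr0 -h.
Qed.

Lemma valN x : x != 0 -> v (- x) = v x.
Proof.
move=> x0; have N1 : (-1 : F) != 0 by rewrite oppr_eq0 oner_neq0.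
have vN1 : v (-1) = 0.
  have := lf_val_mul L N1 N1; rewrite mulrNN mulr1 val1 => e.
  have : v (-1) *+ 2 == 0 by rewrite mulr2n -e.
  by rewrite mulrn_eq0 => /eqP.
by rewrite -mulN1r (lf_val_mul L N1 x0) vN1 add0r.
Qed.

Lemma valV x : x != 0 -> v x^-1 = - v x.
Proof.
move=> x0; have := lf_val_mul L x0 (invr_neq0 x0).
by rewrite divff // val1 => e; apply/eqP; rewrite -addr_eq0 addrC -e.
Qed.

Lemma val_unifX j : v (P ^+ j) = j%:Z.
Proof.
elim: j => [|j IH]; first by rewrite expr0 val1.
rewrite exprS (lf_val_mul L (lf_unif_neq0 L)) ?expf_neq0 ?lf_unif_neq0 //.
by rewrite lf_val_unif IH -addn1 PoszD addrC.
Qed.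

Lemma val_add_lt x y : x != 0 -> y != 0 -> v x < v y ->
  x + y != 0 /\ v (x + y) = v x.
Proof.
move=> x0 y0 lt_xy.
have xy0 : x + y != 0.
  apply: contraTneq lt_xy => /eqP; rewrite addr_eq0 => /eqP ->.
  by rewrite valN // ltxx.
split=> //; apply/eqP; rewrite eq_le.
have -> : v x <= v (x + y).
  by rewrite -(min_idPl (ltW lt_xy)) lf_val_add.
have Ny0 : - y != 0 by rewrite oppr_eq0.
have := lf_val_add L xy0 Ny0 _; rewrite addrK valN //.
move=> /(_ x0); rewrite ge_min andbT => /orP[//|le_yx].
by move: (lt_le_trans lt_xy le_yx); rewrite ltxx.
Qed.

Lemma val_add_vge x y : x != 0 -> vge L y (v x + 1) ->
  x + y != 0 /\ v (x + y) = v x.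
Proof.
move=> x0 [->|vy]; first by rewrite addr0.
have [->|y0] := eqVneq y 0; first by rewrite addr0.
by apply: val_add_lt => //; rewrite -lezD1.
Qed.

Lemma vge_val x j : vge L x j -> x != 0 -> j <= v x.
Proof. by case=> [->|//]; rewrite eqxx. Qed.

Lemma vgeN x j : vge L x j -> vge L (- x) j.
Proof.
case=> [->|h]; first by left; rewrite oppr0.
have [->|x0] := eqVneq x 0; first by left; rewrite oppr0.
by right; rewrite valN.
Qed.

Lemma vgeM x y i j : vge L x i -> vge L y j -> vge L (x * y) (i + j).
Proof.
move=> hx hy; have [->|x0] := eqVneq x 0; first by left; rewrite mul0r.
have [->|y0] := eqVneq y 0; first by left; rewrite mulr0.
by right; rewrite lf_val_mul // lerD // vge_val.
Qed.

Lemma vgeD x y j : vge L x j -> vge L y j -> vge L (x + y) j.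
Proof.
move=> hx hy; have [->|x0] := eqVneq x 0; first by rewrite add0r.
have [->|y0] := eqVneq y 0; first by rewrite addr0.
have [->|xy0] := eqVneq (x + y) 0; first by left.
right; apply: le_trans (lf_val_add L x0 y0 xy0).
by rewrite le_min !vge_val.
Qed.

Lemma unit_o1 : is_unit_o L 1.
Proof. by split; [apply: oner_neq0 | apply: val1]. Qed.

Lemma unit_oN x : is_unit_o L x -> is_unit_o L (- x).
Proof. by move=> [x0 vx]; split; [rewrite oppr_eq0 | rewrite valN]. Qed.

Lemma vge_unit_o x : is_unit_o L x -> vge L x 0.
Proof. by move=> [_ vx]; right; rewrite vx. Qed.

Lemma unit_oM x y : is_unit_o L x -> is_unit_o L y -> is_unit_o L (x * y).
Proof.
by move=> [x0 vx] [y0 vy]; split; [rewrite mulf_neq0 | rewrite lf_val_mul // vx vy].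
Qed.

Lemma unit_o_div_sqr D d : is_unit_o L D -> is_unit_o L d ->
  is_unit_o L (D / (d * d)).
Proof.
move=> [D0 vD] [d0 vd]; have dd0 : d * d != 0 by rewrite mulf_neq0.
split; first by rewrite mulf_neq0 ?invr_eq0.
by rewrite lf_val_mul ?invr_eq0 // valV // lf_val_mul // vD vd.
Qed.

End Valuation.

Section MaximalCompact.
Variables (F : fieldType) (L : local_field F).
Local Notation v := (lf_val L).
Local Notation P := (lf_unif L).

Lemma in_K_mx2 a b c d : vge L a 0 -> vge L b 0 -> vge L c 0 -> vge L d 0 ->
  is_unit_o L (a * d - b * c) -> in_K L (mx2 a b c d).
Proof.
move=> ha hb hc hd hD; split; last by rewrite det_mx2.
by move=> i j; rewrite !mxE; case: i => [[|[|i]]] Hi //; case: j => [[|[|j]]] Hj.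
Qed.

Lemma in_K_antidiag b c : is_unit_o L b -> is_unit_o L c -> in_K L (mx2 0 b c 0).
Proof.
move=> hb hc; apply: in_K_mx2; try by [left | apply: vge_unit_o].
by rewrite mul0r sub0r; apply/unit_oN/unit_oM.
Qed.

Lemma in_K_mulmx k1 k2 : in_K L k1 -> in_K L k2 -> in_K L (k1 *m k2).
Proof.
move=> [e1 D1] [e2 D2]; split; last by rewrite det_mulmx; apply: unit_oM.
have vge_sum i1 i2 j1 j2 i3 i4 j3 j4 :
  vge L (k1 i1 j1 * k2 i2 j2 + k1 i3 j3 * k2 i4 j4) 0.
  by apply: vgeD; rewrite -(addr0 0); apply: vgeM.
rewrite (mx2_eta k1) (mx2_eta k2) mx2_mul => i j; rewrite !mxE.
by case: i => [[|[|i]]] Hi //; case: j => [[|[|j]]] Hj //; apply: vge_sum.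
Qed.

Lemma in_K0p_unit_o k : in_K0p L k -> is_unit_o L (k i1 i1).
Proof.
move=> [[ent [D0 vD]] hc].
move: D0 vD; rewrite {1 2}(mx2_eta k) det_mx2.
set a := k i0 i0; set b := k i0 i1; set c := k i1 i0; set d := k i1 i1 => D0 vD.
have [ad0 vad] : a * d != 0 /\ v (a * d) = 0.
  have [bc0|bc0] := eqVneq (b * c) 0; first by move: D0 vD; rewrite bc0 subr0.
  have vbc : vge L (b * c) (v (a * d - b * c) + 1).
    by rewrite vD; apply: vgeM (ent i0 i1) hc.
  by have := val_add_vge D0 vbc; rewrite subrK vD.
have a0 : a != 0 by apply: contraNneq ad0 => ->; rewrite mul0r.
have d0 : d != 0 by apply: contraNneq ad0 => ->; rewrite mulr0.
split=> //; move: vad; rewrite lf_val_mul //.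
have := vge_val (ent i0 i0) a0; have := vge_val (ent i1 i1) d0.
rewrite -/a -/d; move: (v a) (v d) => x y; lia.
Qed.

Lemma has_level_scalar n h l s : s != 0 ->
  has_level L n h l -> has_level L n (s%:M *m h) l.
Proof.
move=> s0 [ln [z [x [t [u [k1 [[c [c0 ->]] hu hk1 ->]]]]]]].
split=> //; exists (s * c)%:M, x, t, u, k1; split=> //.
  by exists (s * c); rewrite mulf_neq0.
by rewrite scalar_mxM !mulmxA.
Qed.

Lemma level_le_scalar n h l s : s != 0 ->
  level_le L n h l -> level_le L n (s%:M *m h) l.
Proof. by move=> s0 [l' [hl le_l]]; exists l'; split=> //; apply: has_level_scalar. Qed.

Lemma exists_beta (m : nat) (c d : F) : (0 < m)%N -> vge L c 1 -> is_unit_o L d ->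
  exists be (j : nat), [/\ vge L be 0, (0 < j <= m)%N,
     c - d * P ^+ m * be != 0 & v (c - d * P ^+ m * be) = j].
Proof.
move=> m0 hc [d0 vd].
have Pm0 : P ^+ m != 0 by rewrite expf_neq0 ?lf_unif_neq0.
have c_small : vge L c (v (P ^+ m) + 1) -> exists be (j : nat), [/\ vge L be 0,
    (0 < j <= m)%N, c - d * P ^+ m * be != 0 & v (c - d * P ^+ m * be) = j].
  move=> hcm; exists (- d^-1), m.
  have -> : c - d * P ^+ m * - d^-1 = P ^+ m + c by field.
  have [e0 ve] := val_add_vge Pm0 hcm.
  split=> //; last by rewrite ve val_unifX.
    by apply: vgeN; right; rewrite valV // vd.
  by rewrite m0 leqnn.
have [c_eq0|c0] := eqVneq c 0; first by apply: c_small; left.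
case E: (v c) (vge_val hc c0) => [j|//] vc.
have [le_jm|lt_mj] := leqP j m; last by apply: c_small; right; rewrite E val_unifX lezD1 ltz_nat.
by exists 0, j; rewrite mulr0 subr0 E le_jm andbT -(ltz_nat 0); split=> //; left.
Qed.

(* The explicit decomposition
   k w a(varpi^m) = z n(b/d) a(varpi^-m) w n(varpi^-(m-j) u) k1, with
   z = d varpi^m, u = -e d / (det k varpi^j) and k1 = [[1, -beta], [0, det k / d^2]]. *)
Lemma has_level_w_a n m (j : nat) k be : in_K L k -> is_unit_o L (k i1 i1) ->
  vge L be 0 -> (j <= m <= n)%N ->
  k i1 i0 - k i1 i1 * P ^+ m * be != 0 -> v (k i1 i0 - k i1 i1 * P ^+ m * be) = j ->
  has_level L n (k *m wmx F *m amx (P ^+ m)) (m - j).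
Proof.
move=> [_ hD] hd hbe /andP[le_jm le_mn] e0 ve.
rewrite (mx2_eta k) det_mx2 in hD; rewrite (mx2_eta k).
set a := k i0 i0 in hD *; set b := k i0 i1 in hD *.
set c := k i1 i0 in hD e0 ve *; set d := k i1 i1 in hd hD e0 ve *.
have [[d0 vd] [D0 vD]] := (hd, hD); have P0 := lf_unif_neq0 L.
split; first exact: leq_trans (leq_subr j m) le_mn.
exists (d * P ^+ m)%:M, (b / d), (- (m%:Z)),
  (- (c - d * P ^+ m * be) * d / ((a * d - b * c) * P ^+ j)),
  (mx2 1 (- be) 0 ((a * d - b * c) / (d * d))).
split.
- by exists (d * P ^+ m); rewrite mulf_neq0 ?expf_neq0.
- split; first by rewrite !mulf_neq0 ?oppr_eq0 ?invr_eq0 ?mulf_neq0 ?expf_neq0.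
  rewrite !lf_val_mul ?mulf_neq0 ?oppr_eq0 ?invr_eq0 ?mulf_neq0 ?expf_neq0 //.
  by rewrite valN // valV ?mulf_neq0 ?expf_neq0 // lf_val_mul ?expf_neq0 //
    val_unifX vd vD ve addr0 add0r subrr.
- split; first apply: in_K_mx2; rewrite ?mxE //=; try by [left | right; rewrite val1].
  + exact: vgeN.
  + by case: (unit_o_div_sqr hD hd) => _ vq; right; rewrite vq.
  + by rewrite (mulr0 (- be)) subr0 mul1r; apply: unit_o_div_sqr.
  + by split; left; rewrite ?subrr.
- rewrite -exprnN; set l := (m - j)%N.
  have -> : m = (l + j)%N by rewrite /l subnK.
  rewrite /wmx /nmx /amx mx2_scalar !mx2_mul !exprD.
  congr mx2; field; by rewrite ?d0 ?D0 ?expf_neq0.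
Qed.

Lemma level_le_w_a n m k : in_K0p L k -> (0 < m <= n)%N ->
  level_le L n (k *m wmx F *m amx (P ^+ m)) m.-1.
Proof.
move=> hk /andP[m0 le_mn]; have hd := in_K0p_unit_o hk.
have [be [j [hbe /andP[j0 le_jm] e0 ve]]] := exists_beta m0 hk.2 hd.
exists (m - j)%N; split; last by lia.
by apply: has_level_w_a hbe _ e0 ve => //; [case: hk | rewrite le_jm].
Qed.

End MaximalCompact.

Theorem lemma2p2 (F : fieldType) (L : local_field F) (n : nat) :
  odd n ->
  forall (k g : 'M[F]_2),
    in_K0p L k ->
    (g = 1%:M \/ g = mx2 0 1 (lf_unif L) 0) ->
    exists (k' g' z : 'M[F]_2),
      [/\ in_K L k',
          level_le L n (k' *m amx (lf_unif L ^+ uphalf n)) n./2,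
          g' = 1%:M \/ g' = mx2 0 1 (lf_unif L ^+ n) 0,
          in_Z z &
          k *m g *m wmx F *m amx (lf_unif L ^+ uphalf n)
            = k' *m amx (lf_unif L ^+ uphalf n) *m g' *m z].
Proof.
move=> odd_n k g hk hg; set P := lf_unif L; set q := n./2.
have P0 : P != 0 := lf_unif_neq0 L.
have n_eq : n = (q + q).+1 by rewrite -{1}(odd_double_half n) odd_n -addnn.
have m_eq : uphalf n = q.+1 by rewrite uphalf_half odd_n.
have hlevel : level_le L n (k *m wmx F *m amx (P ^+ uphalf n)) q.
  by rewrite m_eq; apply: level_le_w_a => //; rewrite n_eq; lia.
have kK : in_K L k by case: hk.
case: hg => ->.
  exists (k *m wmx F), 1%:M, 1%:M; split.
  - exact: in_K_mulmx kK (in_K_antidiag (unit_o1 L) (unit_oN (unit_o1 L))).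
  - exact: hlevel.
  - by left.
  - by exists 1; rewrite oner_neq0.
  - by rewrite !mulmx1.
have w'_eq : mx2 0 (-1) 1 0 = (-1)%:M *m wmx F.
  by rewrite mx2_scalar /wmx mx2_mul; congr mx2; ring.
exists (k *m mx2 0 (-1) 1 0), (mx2 0 1 (P ^+ n) 0), (P ^- q)%:M; split.
- exact: in_K_mulmx kK (in_K_antidiag (unit_oN (unit_o1 L)) (unit_o1 L)).
- rewrite w'_eq mulmxA scalar_mxC -!mulmxA.
  by apply: level_le_scalar; rewrite ?oppr_eq0 ?oner_neq0 // !mulmxA.
- by right.
- by exists (P ^- q); rewrite invr_eq0 expf_neq0.
- rewrite (mx2_eta k) /wmx /amx !mx2_scalar !mx2_mul m_eq n_eq !exprS !exprD.
  by rewrite /P; congr mx2; field; rewrite expf_neq0.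
Qed.
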